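(* In the homogeneous, resource-abundant setting ($N_k=N>0$ for all $k\in[n]$, $F\ge nN$), let $\boldsymbol O^*$ have $O^*_{\mathcal N}=N/2$ and $O^*_i=0$ for $i<\mathcal N$. Let $\boldsymbol\varepsilon=(0,\dots,0,-\eta)\in\mathbb R^{\mathcal N}$ with $\eta>0$. Then $$T(\boldsymbol\varepsilon)\le-\boldsymbol O^{*t}M\boldsymbol\varepsilon,$$ where $T(\boldsymbol\varepsilon)=\boldsymbol l^t\boldsymbol\varepsilon+\frac12\boldsymbol\varepsilon^tM\boldsymbol\varepsilon$.
   Context: Fix an integer $n\ge2$ and write $[m]=\{1,\dots,m\}$. Let $\mathcal X$ be the collection of subsets of $[n]$ with at least two elements, $\mathcal N=2^n-n-1$, and let $I:\mathcal X\to[\mathcal N]$ be a bijection such that $A\subsetneq B$ implies $I(A)<I(B)$ (so $I([n])=\mathcal N$). Write $f(c)=|I^{-1}(c)|$, $S(c)=\{i\in[\mathcal N]:I^{-1}(c)\subseteq I^{-1}(i)\}$, $B(c)=\{i\in[\mathcal N]:I^{-1}(i)\subsetneq I^{-1}(c)\}$. With effective knowledges $N_k'=\min\{N_k,F\}$ (here all equal to $N$), the objective is $$T(\boldsymbol O)=\sum_{c=1}^{\mathcal N}\frac{\sum_{a\in S(c)}O_a}{\prod_{k\in I^{-1}(c)}N_k'}\Big(\sum_{k\in I^{-1}(c)}N_k'-f(c)\sum_{a\in S(c)}O_a-(f(c)-1)\sum_{a\in B(c)}O_a\Big),$$ and $\boldsymbol l$, $M$ (symmetric) are the unique vector and matrix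 with $T(\boldsymbol O)=\boldsymbol l^t\boldsymbol O+\frac12\boldsymbol O^tM\boldsymbol O$ on $\mathbb R^{\mathcal N}$. *)

From HB Require Import structures.
From mathcomp Require Import all_boot all_order all_algebra.
Set Implicit Arguments.
Unset Strict Implicit.
Unset Printing Implicit Defensive.
Import Order.TTheory GRing.Theory Num.Theory.
Local Open Scope ring_scope.

(* Number of subsets of [n] with at least two elements: 2^n - n - 1. *)
Definition Ncal (n : nat) : nat := (2 ^ n - n - 1)%N.

(* Indices of [Ncal n] are represented 0-based by 'I_(Ncal n):
   the paper's index c corresponds to the ordinal c-1.
   J : 'I_(Ncal n) -> {set 'I_n} is the inverse bijection I^{-1}. *)

Definition Sset (n : nat) (J : 'I_(Ncal n) -> {set 'I_n}) (c : 'I_(Ncal n))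
  : {set 'I_(Ncal n)} := [set i | J c \subset J i].

Definition Bset (n : nat) (J : 'I_(Ncal n) -> {set 'I_n}) (c : 'I_(Ncal n))
  : {set 'I_(Ncal n)} := [set i | J i \proper J c].

Definition fsz (n : nat) (J : 'I_(Ncal n) -> {set 'I_n}) (c : 'I_(Ncal n)) : nat :=
  #|J c|.

Definition Tobj (R : realFieldType) (n : nat) (J : 'I_(Ncal n) -> {set 'I_n})
  (Neff : 'I_n -> R) (O : 'I_(Ncal n) -> R) : R :=
  \sum_(c < Ncal n)
    ((\sum_(a in Sset J c) O a) / (\prod_(k in J c) Neff k)) *
    ((\sum_(k in J c) Neff k)
     - (fsz J c)%:R * (\sum_(a in Sset J c) O a)
     - ((fsz J c)%:R - 1) * (\sum_(a in Bset J c) O a)).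

Definition bform (R : realFieldType) (m : nat) (x : 'I_m -> R) (M : 'M[R]_m)
  (y : 'I_m -> R) : R :=
  \sum_(i < m) \sum_(j < m) x i * M i j * y j.

Definition dotv (R : realFieldType) (m : nat) (l x : 'I_m -> R) : R :=
  \sum_(i < m) l i * x i.

From HB Require Import structures.
From mathcomp Require Import all_boot all_order all_algebra.
From mathcomp Require Import ring lra zify.
Set Implicit Arguments.
Unset Strict Implicit.
Unset Printing Implicit Defensive.

Import Order.TTheory GRing.Theory Num.Theory.
Local Open Scope ring_scope.

(* The last index codes the full coalition [n], which contains every other
   one, so a perturbation supported on it lies in every S(c) and in no B(c):
   T(t e_last) = t (N - t) K with K = sum_c f(c) / N^f(c) >= 0.  Matching this
   with l^t O + 1/2 O^t M O at t = 1 and t = -1 gives l_last = N K and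
   M_last,last = -2 K, and the claim reduces to 0 <= eta^2 K. *)

Lemma Ncal_gt0 n : (2 <= n)%N -> (0 < Ncal n)%N.
Proof.
rewrite /Ncal => hn; suff: (n.+1 < 2 ^ n)%N by lia.
elim: n hn => [|[|[|k]] IH] // _.
by have := IH isT; rewrite [(2 ^ k.+3)%N]expnS; move: (2 ^ k.+2)%N => x; lia.
Qed.

Section TopCoalition.

Variables (n : nat) (J : 'I_(Ncal n) -> {set 'I_n}).
Hypotheses (hn : (2 <= n)%N) (J_inj : injective J)
  (J_surj : forall A : {set 'I_n}, (2 <= #|A|)%N -> exists c, J c = A)
  (J_mono : forall a b, J a \proper J b -> (a < b)%N).

Lemma J_last (top : 'I_(Ncal n)) : top = (Ncal n).-1 :> nat -> J top = setT.
Proof.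
move=> htop; have [c Jc] : exists c, J c = setT.
  by apply: J_surj; rewrite cardsT card_ord.
have [<- //|ne_c] := eqVneq c top.
have : J top \proper J c.
  by rewrite Jc properEneq subsetT andbT -Jc (inj_eq J_inj) eq_sym.
by move/J_mono; rewrite htop; have := ltn_ord c; lia.
Qed.

End TopCoalition.

Definition single (R : pzRingType) m (i : 'I_m) (t : R) : 'I_m -> R :=
  fun j => if j == i then t else 0.

Lemma dotv_single (R : realFieldType) m (l : 'I_m -> R) i t :
  dotv l (single i t) = l i * t.
Proof.
rewrite /dotv (bigD1 i) //= big1 ?addr0 => [|j /negbTE ji]; rewrite /single.
  by rewrite eqxx.
by rewrite ji mulr0.
Qed.

Lemma bform_single (R : realFieldType) m (M : 'M[R]_m) i j s t :
  bform (single i s) M (single j t) = s * M i j * t.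
Proof.
rewrite /bform (bigD1 i) //= [X in _ + X]big1 => [|k /negbTE ki].
  rewrite (bigD1 j) //= big1 ?addr0 => [|k /negbTE kj]; rewrite /single.
    by rewrite !eqxx.
  by rewrite kj mulr0.
by apply: big1 => k' _; rewrite /single ki !mul0r.
Qed.

Definition top_weight (R : realFieldType) n (J : 'I_(Ncal n) -> {set 'I_n})
  (N : R) : R := \sum_(c < Ncal n) (fsz J c)%:R / N ^+ fsz J c.

Lemma top_weight_ge0 (R : realFieldType) n (J : 'I_(Ncal n) -> {set 'I_n}) (N : R) :
  0 <= N -> 0 <= top_weight J N.
Proof.
by move=> N_ge0; apply: sumr_ge0 => c _; rewrite divr_ge0 ?exprn_ge0.
Qed.

Section ObjectiveAtTop.

Variables (R : realFieldType) (n : nat) (J : 'I_(Ncal n) -> {set 'I_n}).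
Variables (top : 'I_(Ncal n)) (Neff : 'I_n -> R) (N : R).
Hypotheses (Jtop : J top = setT) (Neff_const : forall k, Neff k = N)
  (N_neq0 : N != 0).

Lemma sum_Sset_single c (t : R) : \sum_(a in Sset J c) single top t a = t.
Proof.
rewrite (bigD1 top) /=; last by rewrite inE Jtop subsetT.
rewrite big1 ?addr0 => [|i /andP[_ /negbTE it]]; rewrite /single.
  by rewrite eqxx.
by rewrite it.
Qed.

Lemma sum_Bset_single c (t : R) : \sum_(a in Bset J c) single top t a = 0.
Proof.
apply: big1 => i; rewrite inE /single; case: eqP => // ->.
by rewrite Jtop properE subsetT andbF.
Qed.

Lemma Tobj_single_top (t : R) :
  Tobj J Neff (single top t) = t * (N - t) * top_weight J N.
Proof.
rewrite /Tobj /top_weight mulr_sumr; apply: eq_bigr => c _.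
rewrite sum_Sset_single sum_Bset_single /fsz.
rewrite !(eq_bigr (fun=> N) (fun k _ => Neff_const k)) sumr_const prodr_const.
have : N ^+ #|J c| != 0 by rewrite expf_neq0.
by rewrite -mulr_natl => ?; field.
Qed.

End ObjectiveAtTop.

Lemma quadratic_coefs (R : realFieldType) (a b N K : R) :
  (forall t, a * t + 2^-1 * (t * b * t) = t * (N - t) * K) ->
  a = N * K /\ b = - 2 * K.
Proof. by move=> q; have := q 1; have := q (-1); split; lra. Qed.

Theorem mainTheorem4
  (R : realFieldType) (n : nat) (hn : (2 <= n)%N)
  (J : 'I_(Ncal n) -> {set 'I_n})
  (J_inj : injective J)
  (J_card : forall c, (2 <= #|J c|)%N)
  (J_surj : forall A : {set 'I_n}, (2 <= #|A|)%N -> exists c, J c = A)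
  (J_mono : forall a b, J a \proper J b -> (a < b)%N)
  (Nk : 'I_n -> R) (N F : R)
  (hNk : forall k, Nk k = N) (hN : 0 < N) (hF : n%:R * N <= F)
  (l : 'I_(Ncal n) -> R) (M : 'M[R]_(Ncal n))
  (hMsym : M^T = M)
  (hlM : forall O : 'I_(Ncal n) -> R,
      Tobj J (fun k => Num.min (Nk k) F) O = dotv l O + 2^-1 * bform O M O)
  (eta : R) (heta : 0 < eta) :
  let Ostar : 'I_(Ncal n) -> R :=
    fun i => if (i : nat) == (Ncal n).-1 then N / 2 else 0 in
  let eps : 'I_(Ncal n) -> R :=
    fun i => if (i : nat) == (Ncal n).-1 then - eta else 0 in
  dotv l eps + 2^-1 * bform eps M eps <= - bform Ostar M eps.
Proof.
have top_lt : ((Ncal n).-1 < Ncal n)%N by rewrite ltn_predL Ncal_gt0.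
pose top := Ordinal top_lt.
have Jtop : J top = setT by exact: J_last.
have Neff_N k : Num.min (Nk k) F = N.
  rewrite hNk; apply/min_idPl; apply: le_trans hF.
  by rewrite -{1}(mul1r N) ler_pM2r // ler1n ltnW.
have [l_top M_top] : l top = N * top_weight J N /\
                     M top top = - 2 * top_weight J N.
  apply: quadratic_coefs => t.
  by rewrite -dotv_single -bform_single -hlM (Tobj_single_top Jtop Neff_N) ?gt_eqF.
change (dotv l (single top (- eta)) + 2^-1 * bform (single top (- eta)) M
   (single top (- eta)) <= - bform (single top (N / 2)) M (single top (- eta))).
rewrite dotv_single !bform_single l_top M_top.
have : 0 <= eta * eta * top_weight J N.
  by rewrite !mulr_ge0 ?top_weight_ge0 ?ltW.
lra.
Qed.
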